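(* Let $\tilde L$ be a minimum-size counterexample. If $M$ is a nonempty set of meet-irreducible elements of $\tilde L$, then there exists a join-irreducible element $j$ of $\tilde L$ such that $|{\uparrow}j\cap M|>\frac{|M|}{2}$.
   Context: For a poset $P$, $x$ upper covers $y$ (and $y$ lower covers $x$) if $y<x$ with nothing strictly between. Join-irreducible: upper covers exactly one element; meet-irreducible: lower covers exactly one element. For $x\in P$, ${\uparrow}x=\{y\in P: x\le y\}$. A counterexample is a finite lattice $L$ with $|L|>1$ in which every join-irreducible $j$ satisfies $|{\uparrow}j|>|L|/2$; a minimum-size counterexample is a counterexample $\tilde L$ such that no counterexample has fewer elements. *)

From mathcomp Require Import all_boot all_order.
Set Implicit Arguments. Unset Strict Implicit. Unset Printing Implicit Defensive.
Import Order.TTheory.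
Local Open Scope order_scope.

Section Defs.
Context {d : Order.disp_t} {P : finPOrderType d}.

Definition covers (x y : P) : bool :=
  (y < x) && [forall z : P, ~~ ((y < z) && (z < x))].

Definition join_irr (j : P) : bool := #|[set y : P | covers j y]| == 1%N.

Definition meet_irr (m : P) : bool := #|[set y : P | covers y m]| == 1%N.

Definition upset (x : P) : {set P} := [set y : P | x <= y].

End Defs.

Definition counterexample {d : Order.disp_t} (L : finLatticeType d) : Prop :=
  (1 < #|L|)%N /\
  forall j : L, join_irr j -> (#|L| < 2 * #|upset j|)%N.

Definition min_counterexample {d : Order.disp_t} (L : finLatticeType d) : Prop :=
  counterexample L /\
  forall (d' : Order.disp_t) (L' : finLatticeType d'),
    counterexample L' -> (#|L| <= #|L'|)%N.

From HB Require Import structures.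
From mathcomp Require Import all_boot all_order zify.
Set Implicit Arguments. Unset Strict Implicit. Unset Printing Implicit Defensive.
Import Order.TTheory.
Local Open Scope order_scope.

(* If every join-irreducible lay below at most half of M, delete M from L.  As
   M consists of meet-irreducibles, the remaining elements form a meet-closed
   set containing the top, hence a lattice with fewer elements.  Each of its
   join-irreducibles lifts to a join-irreducible j of L with the same up-set
   outside M, so it lies below more than half of the remaining elements: the
   smaller lattice would be a counterexample.  If only the top survives, the
   top is join-irreducible in L with a one-element up-set, contradicting
   |L| > 1. *)

Lemma card_majority_setC (T : finType) (A B : {set T}) :
  (#|T| < 2 * #|A|)%N -> (2 * #|A :&: B| <= #|B|)%N ->
  (#|~: B| < 2 * #|A :&: ~: B|)%N.
Proof. by rewrite -(cardsC B) -(cardsID B A) setDE; lia. Qed.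

Section FinPOrder.
Context {d : Order.disp_t} {P : finPOrderType d}.

Definition downset (x : P) : {set P} := [set y | y <= x].

Lemma card_downset_lt (x y : P) : x < y -> (#|downset x| < #|downset y|)%N.
Proof.
move=> lt_xy; apply: proper_card; apply/properP; split.
  by apply/subsetP => z; rewrite !inE => /le_trans; apply; apply: ltW.
by exists y; rewrite !inE ?lexx // lt_geF.
Qed.

Lemma exists_lower_cover (x y : P) : x < y -> exists2 c, x <= c & covers y c.
Proof.
move=> lt_xy; have x_ok : (x <= x) && (x < y) by rewrite lexx lt_xy.
have [c /andP[le_xc lt_cy] c_max] :=
  @arg_maxnP P x (fun z => (x <= z) && (z < y)) (fun z => #|downset z|) x_ok.
exists c => //; rewrite /covers lt_cy; apply/forallP => z; apply/negP.
move=> /andP[lt_cz lt_zy].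
have := c_max z; rewrite (le_trans le_xc (ltW lt_cz)) lt_zy => /(_ isT).
by rewrite /= leqNgt card_downset_lt.
Qed.

Lemma join_irrP (j : P) :
  join_irr j <-> exists2 k, k < j & forall y, y < j -> y <= k.
Proof.
split=> [/cards1P[k covers_j] | [k lt_kj k_max]].
  have cover_k y : covers j y -> y = k.
    by move=> cov; apply/set1P; rewrite -covers_j inE.
  have : k \in [set y | covers j y] by rewrite covers_j set11.
  rewrite inE => /andP[lt_kj _]; exists k => // y /exists_lower_cover[c le_yc /cover_k <-].
  exact: le_yc.
have cov_k : covers j k.
  rewrite /covers lt_kj; apply/forallP => z; apply/negP => /andP[lt_kz /k_max].
  by rewrite lt_geF.
apply/cards1P; exists k; apply/setP => y; rewrite !inE.
apply/idP/eqP => [cov_y | -> //].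
have /k_max : y < j by case/andP: cov_y.
rewrite le_eqVlt => /orP[/eqP // | lt_yk].
by case/andP: cov_y => _ /forallP/(_ k); rewrite lt_yk lt_kj.
Qed.

End FinPOrder.

Section FinPOrderDual.
Context {d : Order.disp_t} {P : finPOrderType d}.

Lemma covers_dual (x y : P) : covers (x : P^d) y = covers y x.
Proof.
rewrite /covers !ltEdual; congr (_ && _).
by apply: eq_forallb => z; rewrite !ltEdual andbC.
Qed.

Lemma meet_irrP (m : P) :
  meet_irr m <-> exists2 u, m < u & forall y, m < y -> u <= y.
Proof.
have -> : meet_irr m = join_irr (m : P^d).
  by congr (_ == _)%N; apply: eq_card => y; rewrite !inE covers_dual.
split=> [/join_irrP[u lt_um u_min] | [u lt_mu u_min]].
  by exists u => // y lt_my; have := u_min y; rewrite !ltEdual leEdual; apply.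
by apply/join_irrP; exists u => // y; rewrite !ltEdual leEdual; apply: u_min.
Qed.

End FinPOrderDual.

Section FinLattice.
Context {d : Order.disp_t} {L : finLatticeType d}.

Lemma meet_irr_ltI (m a b : L) : meet_irr m -> m < a -> m < b -> m < a `&` b.
Proof.
move=> /meet_irrP[u lt_mu u_min] lt_ma lt_mb.
have le_m : m <= a `&` b by rewrite lexI !ltW.
have [eq_m | neq_m] := eqVneq m (a `&` b); last by rewrite lt_neqAle neq_m.
have : u <= a `&` b by rewrite lexI !u_min.
by rewrite -eq_m lt_geF.
Qed.

Lemma meet_closed_setC_meet_irr (M : {set L}) (x y : L) :
  (forall m, m \in M -> meet_irr m) ->
  x \in ~: M -> y \in ~: M -> x `&` y \in ~: M.
Proof.
move=> M_irr; rewrite !inE => xM yM; apply/negP => xyM.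
have lt_x : x `&` y < x.
  by rewrite lt_neqAle leIl andbT; apply: contraNneq xM => <-.
have lt_y : x `&` y < y.
  by rewrite lt_neqAle leIr andbT; apply: contraNneq yM => <-.
by have := meet_irr_ltI (M_irr _ xyM) lt_x lt_y; rewrite ltxx.
Qed.

Lemma lower_covers_meet_lt (t b c : L) :
  covers t b -> covers t c -> b != c -> b `&` c < b.
Proof.
move=> cov_b /andP[lt_ct _] neq_bc.
rewrite lt_neqAle leIl andbT; apply/negP => /eqP/meet_idPl le_bc.
have lt_bc : b < c by rewrite lt_neqAle neq_bc.
by case/andP: cov_b => _ /forallP/(_ c); rewrite lt_bc lt_ct.
Qed.

Lemma join_irr_of_meet_irr_below (t a : L) :
  a < t -> (forall x, x < t -> meet_irr x) -> join_irr t.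
Proof.
move=> lt_at below_irr; have [c _ cov_c] := exists_lower_cover lt_at.
have lt_ct : c < t by case/andP: cov_c.
apply/join_irrP; exists c => // y /exists_lower_cover[b le_yb cov_b].
apply: le_trans le_yb _; have [-> // | neq_bc] := eqVneq b c.
have lt_b := lower_covers_meet_lt cov_b cov_c neq_bc.
have lt_c : b `&` c < c by rewrite meetC (lower_covers_meet_lt cov_c cov_b) // eq_sym.
have irr_bc : meet_irr (b `&` c).
  by apply: below_irr; apply: lt_trans lt_b _; case/andP: cov_b.
by have := meet_irr_ltI irr_bc lt_b lt_c; rewrite ltxx.
Qed.

Lemma exists_top (x0 : L) : exists t : L, forall w, w <= t.
Proof.
have [t _ t_max] := @arg_maxnP L x0 xpredT (fun z => #|downset z|) isT.
exists t => w; apply/negPn/negP => not_le_wt.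
have lt_t : t < t `|` w.
  by rewrite lt_neqAle leUl andbT eq_sym; apply: contraNneq not_le_wt => /join_idPl.
by have := t_max (t `|` w) isT; rewrite /= leqNgt card_downset_lt.
Qed.

Lemma upset_top (t : L) : (forall w, w <= t) -> upset t = [set t].
Proof.
by move=> t_top; apply/setP => w; rewrite !inE eq_le t_top.
Qed.

Lemma meet_irr_topF (t : L) : (forall w, w <= t) -> meet_irr t = false.
Proof.
by move=> t_top; apply/negP => /meet_irrP[u lt_tu _]; have := t_top u; rewrite lt_geF.
Qed.

Lemma meet_irr_below_top_not_counterexample (t : L) :
  (forall w, w <= t) -> (forall x, x < t -> meet_irr x) -> ~ counterexample L.
Proof.
move=> t_top below_irr [L_gt1 L_half].
have [a lt_at] : exists a, a < t.
  have [x [y [_ _ neq_xy]]] := card_gt1P L_gt1.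
  have [eq_xt | neq_xt] := eqVneq x t; last by exists x; rewrite lt_neqAle neq_xt t_top.
  by exists y; rewrite lt_neqAle t_top andbT -eq_xt eq_sym.
have := L_half t (join_irr_of_meet_irr_below lt_at below_irr).
by rewrite upset_top // cards1; case: #|L| L_gt1 => [|[|]].
Qed.

End FinLattice.

Section MeetClosedSubset.
Context {d : Order.disp_t} {L : finLatticeType d} (S : {set L}).
Hypothesis meet_closed_S : forall x y, x \in S -> y \in S -> x `&` y \in S.

Definition subS := {x : L | x \in S}.
HB.instance Definition _ := [isSub of subS for sval].
HB.instance Definition _ := [Finite of subS by <:].
HB.instance Definition _ := [SubChoice_isSubPOrder of subS by <: with d].

Definition meet_subS (x y : subS) : subS :=
  Sub (val x `&` val y) (meet_closed_S (valP x) (valP y)).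

Lemma le_subS (x y : subS) : (x <= y) = (val x <= val y).
Proof. by []. Qed.

Lemma card_upset_subS (x : subS) : #|upset x| = #|upset (val x) :&: S|.
Proof.
suff -> : upset (val x) :&: S = val @: upset x by rewrite card_imset //; apply: val_inj.
apply/setP => w; rewrite !inE; apply/andP/imsetP => [[le_xw wS] | [y]].
  by exists (Sub w wS : subS); rewrite ?inE ?SubK.
by rewrite inE => le_xy ->; split; [exact: le_xy | exact: valP].
Qed.

Lemma join_irr_lift (j' : subS) : join_irr j' ->
  exists2 j : L, join_irr j & forall w, w \in S -> (j <= w) = (val j' <= w).
Proof.
(* j is minimal below j' but not below the lower cover k' of j', so every
   a < j lies below k'. *)
move=> /join_irrP[k' lt_kj' k'_max]; set J := val j'; set K := val k'.
have lt_KJ : K < J := lt_kj'.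
have below_K w : w \in S -> J `&` w < J -> J `&` w <= K.
  by move=> wS; apply: (k'_max (meet_subS j' (Sub w wS))).
have J_ok : (J <= J) && ~~ (J <= K) by rewrite lexx (lt_geF lt_KJ).
have [j /andP[le_jJ not_le_jK] j_min] :=
  @arg_minnP L J (fun z => (z <= J) && ~~ (z <= K)) (fun z => #|downset z|) J_ok.
have below_j a : a < j -> a <= K.
  move=> lt_aj; apply/negPn/negP => not_le_aK.
  have := j_min a; rewrite (le_trans (ltW lt_aj) le_jJ) not_le_aK => /(_ isT).
  by rewrite /= leqNgt card_downset_lt.
exists j.
  apply/join_irrP; exists (j `&` K) => [|a lt_aj].
    by rewrite lt_neqAle leIl andbT; apply: contraNneq not_le_jK => /meet_idPl.
  by rewrite lexI (ltW lt_aj) below_j.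
move=> w wS; apply/idP/idP => [le_jw | /(le_trans le_jJ) //].
have [eq_Jw | neq_Jw] := eqVneq (J `&` w) J; first by apply/meet_idPl.
have lt_JwJ : J `&` w < J by rewrite lt_neqAle neq_Jw leIl.
have : j <= K by apply: le_trans (below_K w wS lt_JwJ); rewrite lexI le_jJ.
by rewrite (negbTE not_le_jK).
Qed.

Variables (t : L) (t_top : forall w, w <= t) (t_in_S : t \in S).

Definition join_subS (x y : subS) : subS :=
  arg_min (Sub t t_in_S : subS) (fun z => (x <= z) && (y <= z))
    (fun z => #|downset (val z)|).

Lemma meet_subSP (x y z : subS) : (x <= meet_subS y z) = (x <= y) && (x <= z).
Proof. exact: lexI. Qed.

Lemma join_subSP (x y z : subS) : (join_subS x y <= z) = (x <= z) && (y <= z).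
Proof.
have t_ok : (x <= Sub t t_in_S) && (y <= Sub t t_in_S) by rewrite !le_subS !SubK !t_top.
rewrite /join_subS; case: arg_minnP => // j /andP[le_xj le_yj] j_min.
apply/idP/andP => [le_jz | [le_xz le_yz]]; first by split; apply: le_trans le_jz.
have := j_min (meet_subS j z); rewrite !meet_subSP le_xj le_yj le_xz le_yz => /(_ isT).
rewrite leqNgt le_subS; apply: contraNT => not_le_jz; apply: card_downset_lt => /=.
by rewrite lt_neqAle leIl andbT; apply: contraNneq not_le_jz => /meet_idPl.
Qed.

HB.instance Definition _ := Order.POrder_MeetJoin_isLattice.Build d subS meet_subSP join_subSP.

Definition sublattice : finLatticeType d := subS.

Lemma card_sublattice : #|sublattice| = #|S|.
Proof. by rewrite card_sig; apply: eq_card. Qed.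

Lemma sublattice_counterexample : (1 < #|S|)%N ->
  (forall j : L, join_irr j -> (#|S| < 2 * #|upset j :&: S|)%N) ->
  counterexample sublattice.
Proof.
move=> S_gt1 S_half; split; first by rewrite card_sublattice.
move=> j' /join_irr_lift[j j_irr j_up]; rewrite card_sublattice card_upset_subS.
suff -> : upset (val j') :&: S = upset j :&: S by apply: S_half.
by apply/setP => w; rewrite !inE; case: (boolP (w \in S)) => [/j_up -> | _]; rewrite ?andbF.
Qed.

End MeetClosedSubset.

Theorem theorem2p9 (d : Order.disp_t) (L : finLatticeType d)
  (hmin : min_counterexample L) (M : {set L})
  (hM0 : M != set0) (hMirr : forall m, m \in M -> meet_irr m) :
  exists j : L, join_irr j /\ (#|M| < 2 * #|upset j :&: M|)%N.
Proof.
case: hmin => [[L_gt1 L_half] L_min].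
case: (boolP [exists j : L, join_irr j && (#|M| < 2 * #|upset j :&: M|)%N]).
  by move=> /existsP[j /andP[j_irr j_big]]; exists j.
move=> /existsPn few_above; exfalso.
have [x0 _] := card_gt0P (ltnW L_gt1).
have [t t_top] := exists_top x0.
have S_meet := meet_closed_setC_meet_irr hMirr.
have t_in_S : t \in ~: M.
  by rewrite inE; apply: contraFN (meet_irr_topF t_top) => /hMirr.
have [S_gt1 | S_le1] := ltnP 1 #|~: M|.
  have S_half j : join_irr j -> (#|~: M| < 2 * #|upset j :&: ~: M|)%N.
    move=> j_irr; apply: card_majority_setC (L_half j j_irr) _.
    by have := few_above j; rewrite j_irr /= -leqNgt.
  have := L_min _ _ (sublattice_counterexample S_meet t_top t_in_S S_gt1 S_half).
  by rewrite card_sublattice -(cardsC M) -card_gt0 in hM0 *; lia.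
apply: (meet_irr_below_top_not_counterexample t_top _ (conj L_gt1 L_half)).
move=> x lt_xt; apply: hMirr; apply: contraLR S_le1 => x_notin_M; rewrite -ltnNge.
by apply/card_gt1P; exists x, t; rewrite inE x_notin_M t_in_S lt_eqF.
Qed.
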